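(* Let $\mathcal{M}=(V,\{A_i\}_{i\in V},P)$ be a finite Markov decision process with state set $V=\{1,\dots,n\}$, nonempty finite action sets $A_i$, and transition probabilities $P(i,a,j)\ge 0$ with $\sum_{j=1}^n P(i,a,j)=1$ for all $i\in V$, $a\in A_i$. Let $R\subseteq V$ and $S\subseteq V\setminus R$, and let $\rho>n$. Consider the linear programs $$\text{(LP1)}\quad \min_{\mathbf{x}\in\mathbb{R}^n}\ \mathbf{1}^T\mathbf{x}\ \text{ s.t. } \mathbf{x}\in[0,1]^n,\ x_i=1\ \forall i\in S,\ x_i=0\ \forall i\in R,\ x_i\ge \sum_{j=1}^n P(i,a,j)x_j\ \forall i\in V\setminus R,\ a\in A_i,$$ $$\text{(LP2)}\quad \min_{\mathbf{x}\in\mathbb{R}^n}\ \mathbf{1}^T\mathbf{x}+\rho\sum_{i\in S}(1-x_i)\ \text{ s.t. } \mathbf{x}\in[0,1]^n,\ x_i=0\ \forall i\in R,\ x_i\ge \sum_{j=1}^n P(i,a,j)x_j\ \forall i\in V\setminus R,\ a\in A_i.$$ Then (LP1) and (LP2) have the same optimal value and the same set of optimal solutions.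
   Context: Here $\mathbf{1}$ denotes the all-ones vector in $\mathbb{R}^n$. *)

From HB Require Import structures.
From mathcomp Require Import all_boot all_order all_algebra.
Set Implicit Arguments. Unset Strict Implicit. Unset Printing Implicit Defensive.
Import Order.TTheory GRing.Theory Num.Theory.
Local Open Scope ring_scope.

Definition is_MDP (R : realFieldType) (n : nat) (A : 'I_n -> finType)
  (P : forall i : 'I_n, A i -> 'I_n -> R) : Prop :=
  (forall i : 'I_n, 0 < #|A i|)%N /\
  (forall (i : 'I_n) (a : A i) (j : 'I_n), 0 <= P i a j) /\
  (forall (i : 'I_n) (a : A i), \sum_(j < n) P i a j = 1).

Definition common_feas (R : realFieldType) (n : nat) (A : 'I_n -> finType)
  (P : forall i : 'I_n, A i -> 'I_n -> R) (Rs : {set 'I_n}) (x : 'I_n -> R) : Prop :=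
  (forall i, 0 <= x i <= 1) /\
  (forall i, i \in Rs -> x i = 0) /\
  (forall i, i \notin Rs -> forall a : A i, \sum_(j < n) P i a j * x j <= x i).

Definition feas1 (R : realFieldType) (n : nat) (A : 'I_n -> finType)
  (P : forall i : 'I_n, A i -> 'I_n -> R) (Rs S : {set 'I_n}) (x : 'I_n -> R) : Prop :=
  common_feas P Rs x /\ (forall i, i \in S -> x i = 1).

Definition feas2 (R : realFieldType) (n : nat) (A : 'I_n -> finType)
  (P : forall i : 'I_n, A i -> 'I_n -> R) (Rs : {set 'I_n}) (x : 'I_n -> R) : Prop :=
  common_feas P Rs x.

Definition obj1 (R : realFieldType) (n : nat) (x : 'I_n -> R) : R := \sum_(i < n) x i.

Definition obj2 (R : realFieldType) (n : nat) (rho : R) (S : {set 'I_n})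
  (x : 'I_n -> R) : R := \sum_(i < n) x i + rho * \sum_(i in S) (1 - x i).

Definition is_opt_value (R : realFieldType) (n : nat) (feas : ('I_n -> R) -> Prop)
  (obj : ('I_n -> R) -> R) (v : R) : Prop :=
  (forall y, feas y -> v <= obj y) /\
  (forall w, (forall y, feas y -> w <= obj y) -> w <= v).

Definition is_opt_sol (R : realFieldType) (n : nat) (feas : ('I_n -> R) -> Prop)
  (obj : ('I_n -> R) -> R) (x : 'I_n -> R) : Prop :=
  feas x /\ (forall y, feas y -> obj x <= obj y).

From HB Require Import structures.
From mathcomp Require Import all_boot all_order all_algebra.
From mathcomp Require Import ring lra.
Set Implicit Arguments. Unset Strict Implicit. Unset Printing Implicit Defensive.
Import Order.TTheory GRing.Theory Num.Theory.
Local Open Scope ring_scope.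

(* A feasible point y of (LP2) is repaired into a feasible point of (LP1) by adding
   its deficit d = sum_(i in S) (1 - y_i) to every coordinate outside R and capping at 1:
   since each P(i, a, .) is a probability vector the result stays excessive, it equals 1
   on S, and its objective is at most that of y in (LP2) minus (rho - n) d. As rho > n,
   every feasible point of (LP2) that violates x = 1 on S is strictly beaten by a feasible
   point of (LP1), on which both objectives agree; hence the two problems share optimal
   values and optimal solutions. That (LP1) has an optimal value at all, over an arbitrary
   ordered field, follows from Fourier-Motzkin elimination: projecting the feasible set
   onto the objective axis leaves finitely many one-variable constraints. *)

Lemma exists_seq_max (R : realDomainType) (r : R) (s : seq R) :
  exists2 m, m \in r :: s & all (fun x => x <= m) (r :: s).
Proof.
elim: s r => [|x s IH] r; first by exists r; rewrite ?mem_seq1 /= ?lexx.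
have [m m_in m_max] := IH x.
have [le_rm | lt_mr] := leP r m.
  by exists m; [rewrite inE m_in orbT | rewrite /= le_rm].
exists r; first by rewrite inE eqxx.
rewrite /= lexx; apply: sub_all m_max => y le_ym; exact: le_trans le_ym (ltW lt_mr).
Qed.

Lemma exists_between (R : realDomainType) (ls us : seq R) :
  allrel (fun l u => l <= u) ls us ->
  exists t, all (fun l => l <= t) ls /\ all (fun u => t <= u) us.
Proof.
elim: ls => [_ | l ls IH].
  elim: us => [|u us [t [_ ht]]]; first by exists 0.
  exists (Num.min u t); split=> //=; rewrite ge_min lexx /=.
  by apply: sub_all ht => v hv /=; rewrite ge_min hv orbT.
rewrite allrel_consl => /andP[hl /IH[t [hls hus]]].
exists (Num.max l t); split=> /=.
  by rewrite le_max lexx /=; apply: sub_all hls => v hv /=; rewrite le_max hv orbT.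
by apply/allP => u hu; rewrite ge_max (allP hl u hu) (allP hus u hu).
Qed.

Section FourierMotzkin.
Variable R : realFieldType.

(* A constraint (a, b) reads b <= a_0 x_0 + ... + a_(m-1) x_(m-1); entries of a beyond m are ignored. *)
Definition sat m (x : nat -> R) (c : seq R * R) : bool :=
  c.2 <= \sum_(j < m) c.1`_j * x j.

(* (-q_m) p + p_m q: for p_m > 0 > q_m a nonnegative combination of p and q in which x_m cancels. *)
Definition fm_comb m (p q : seq R * R) : seq R * R :=
  (mkseq (fun j => - q.1`_m * p.1`_j + p.1`_m * q.1`_j) m,
   - q.1`_m * p.2 + p.1`_m * q.2).

Definition fm_step m (L : seq (seq R * R)) : seq (seq R * R) :=
  [seq c <- L | c.1`_m == 0] ++
  [seq fm_comb m p q | p <- [seq c <- L | 0 < c.1`_m], q <- [seq c <- L | c.1`_m < 0]].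

Fixpoint fm_elim k (L : seq (seq R * R)) : seq (seq R * R) :=
  if k is k'.+1 then fm_elim k' (fm_step k L) else L.

Lemma sat_recr m x c :
  sat m.+1 x c = (c.2 <= \sum_(j < m) c.1`_j * x j + c.1`_m * x m).
Proof. by rewrite /sat big_ord_recr. Qed.

Lemma sat_fm_comb m x p q :
  sat m x (fm_comb m p q) = (- q.1`_m * p.2 + p.1`_m * q.2 <=
    - q.1`_m * \sum_(j < m) p.1`_j * x j + p.1`_m * \sum_(j < m) q.1`_j * x j).
Proof.
rewrite /sat !mulr_sumr -big_split; congr (_ <= _); apply: eq_bigr => j _ /=.
by rewrite nth_mkseq //; ring.
Qed.

Lemma fm_step_sound m x L : all (sat m.+1 x) L -> all (sat m x) (fm_step m L).
Proof.
move=> /allP hL; apply/allP => c; rewrite mem_cat => /orP[|/allpairsP[[p q] [/=]]].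
  by rewrite mem_filter => /andP[/eqP c_m /hL]; rewrite sat_recr c_m mul0r addr0.
rewrite !mem_filter => /andP[p_gt0 /hL hp] /andP[q_lt0 /hL hq] ->.
rewrite sat_fm_comb; rewrite !sat_recr in hp hq.
move: hp hq; set Sp := \sum_(j < m) _; set Sq := \sum_(j < m) _ => hp hq; nra.
Qed.

Lemma fm_step_complete m x L : all (sat m x) (fm_step m L) ->
  exists t, all (sat m.+1 (fun j => if j == m then t else x j)) L.
Proof.
move=> /allP hL.
pose lhs (c : seq R * R) := \sum_(j < m) c.1`_j * x j.
pose bound (c : seq R * R) := (c.2 - lhs c) / c.1`_m.
have satE t c : sat m.+1 (fun j => if j == m then t else x j) c = (c.2 <= lhs c + c.1`_m * t).
  rewrite sat_recr eqxx; congr (_ <= _ + _); apply: eq_bigr => j _.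
  by rewrite ltn_eqF.
have sat_pos t c : 0 < c.1`_m -> (c.2 <= lhs c + c.1`_m * t) = (bound c <= t).
  by move=> c_gt0; rewrite ler_pdivrMr // -lerBlDl mulrC.
have sat_neg t c : c.1`_m < 0 -> (c.2 <= lhs c + c.1`_m * t) = (t <= bound c).
  by move=> c_lt0; rewrite ler_ndivlMr // -lerBlDl mulrC.
have lo_le_hi : allrel (fun l u => l <= u) [seq bound c | c <- L & 0 < c.1`_m]
                                          [seq bound c | c <- L & c.1`_m < 0].
  apply/allrelP => l u /mapP[p] /[!mem_filter] /andP[p_gt0 pL] ->.
  move=> /mapP[q] /[!mem_filter] /andP[q_lt0 qL] ->.
  have /hL : fm_comb m p q \in fm_step m L.
    by rewrite mem_cat; apply/orP; right; apply: allpairs_f; rewrite mem_filter ?p_gt0 ?q_lt0.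
  rewrite sat_fm_comb /bound ler_pdivrMr // mulrAC ler_ndivlMr //.
  rewrite -/(lhs p) -/(lhs q); nra.
have [t [/allP t_lo /allP t_hi]] := exists_between lo_le_hi.
exists t; apply/allP => c cL; rewrite satE.
case: (ltgtP c.1`_m 0) => [c_lt0 | c_gt0 | c_m0].
- by rewrite sat_neg // t_hi // map_f // mem_filter c_lt0.
- by rewrite sat_pos // t_lo // map_f // mem_filter c_gt0.
rewrite c_m0 mul0r addr0; apply: hL.
by rewrite mem_cat mem_filter c_m0 eqxx cL.
Qed.

Lemma fm_elim_sound k x L : all (sat k.+1 x) L -> all (sat 1 x) (fm_elim k L).
Proof. by elim: k L => //= k IH L hL; apply/IH/fm_step_sound. Qed.

Lemma fm_elim_complete k x L : all (sat 1 x) (fm_elim k L) ->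
  exists2 y, all (sat k.+1 y) L & y 0%N = x 0%N.
Proof.
elim: k L x => [|k IH] L x /= hL; first by exists x.
have [y /fm_step_complete[t ht] y0] := IH _ _ hL.
by exists (fun j => if j == k.+1 then t else y j).
Qed.

Lemma eq_sat m x y : (forall j, (j < m)%N -> x j = y j) -> sat m x =1 sat m y.
Proof. by move=> xy c; rewrite /sat; under eq_bigr => j _ do rewrite xy //. Qed.

Lemma sat1 x c : sat 1 x c = (c.2 <= c.1`_0 * x 0%N).
Proof. by rewrite /sat big_ord1. Qed.

Lemma lp_min_attained1 (L : seq (seq R * R)) t0 lb :
  let feas t := all (fun c => c.2 <= c.1`_0 * t) L in
  feas t0 -> (forall t, feas t -> lb <= t) ->
  exists2 tm, feas tm & forall t, feas t -> tm <= t.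
Proof.
move=> feas feas_t0 lb_le.
pose lows := [seq c.2 / c.1`_0 | c <- L & 0 < c.1`_0].
have lows_le t : feas t -> all (fun r => r <= t) lows.
  move=> /allP ht; apply/allP => _ /mapP[c] /[!mem_filter] /andP[c_gt0 cL] ->.
  by rewrite ler_pdivrMr // mulrC ht.
case E : lows => [|r s].
  (* Nothing bounds t from below, so t can be pushed below lb. *)
  have c_le0 c : c \in L -> c.1`_0 <= 0.
    move=> cL; rewrite leNgt; apply/negP => c_gt0.
    have : c.2 / c.1`_0 \in lows.
      by apply/mapP; exists c; rewrite ?mem_filter ?c_gt0.
    by rewrite E.
  pose t := Num.min t0 (lb - 1).
  have feas_t : feas t.
    apply/allP => c cL; have := allP feas_t0 c cL; have := c_le0 c cL.
    have : t <= t0 by rewrite ge_min lexx.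
    nra.
  have := lb_le t feas_t; have : t <= lb - 1 by rewrite ge_min lexx orbT.
  lra.
have [tm tm_in tm_max] := exists_seq_max r s.
have tm_le t : feas t -> tm <= t by move=> /lows_le; rewrite E => /allP; apply.
exists tm => //; apply/allP => c cL.
have [c_gt0 | c_le0] := ltP 0 c.1`_0.
  have : c.2 / c.1`_0 <= tm.
    by apply: (allP tm_max); rewrite -E; apply/mapP; exists c; rewrite ?mem_filter ?c_gt0.
  by rewrite ler_pdivrMr // mulrC.
have := allP feas_t0 c cL; have := tm_le t0 feas_t0; nra.
Qed.

Lemma lp_min_attained m (L : seq (seq R * R)) x0 lb :
  all (sat m.+1 x0) L -> (forall x, all (sat m.+1 x) L -> lb <= x 0%N) ->
  exists2 x, all (sat m.+1 x) L & forall y, all (sat m.+1 y) L -> x 0%N <= y 0%N.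
Proof.
move=> hx0 lb_le.
have proj y : all (sat m.+1 y) L -> all (fun c => c.2 <= c.1`_0 * y 0%N) (fm_elim m L).
  by move=> /fm_elim_sound; apply: sub_all => c; rewrite sat1.
have lift t : all (fun c => c.2 <= c.1`_0 * t) (fm_elim m L) ->
    exists2 y, all (sat m.+1 y) L & y 0%N = t.
  by move=> ht; apply: (@fm_elim_complete _ (fun _ => t)); apply: sub_all ht => c; rewrite sat1.
have [|tm /lift[x hx x0_tm] tm_min] := lp_min_attained1 (lb := lb) (proj x0 hx0).
  by move=> t /lift[y hy <-]; apply: lb_le.
by exists x => // y /proj; rewrite x0_tm; apply: tm_min.
Qed.

End FourierMotzkin.

Section ExactPenalty.
Variables (R : realFieldType) (n : nat).
Variables (F1 F2 : ('I_n -> R) -> Prop) (f1 f2 : ('I_n -> R) -> R).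
Hypothesis F1_F2 : forall x, F1 x -> F2 x.
Hypothesis f2_f1 : forall x, F1 x -> f2 x = f1 x.
Hypothesis exact_penalty : forall y, F2 y -> F1 y \/ exists2 z, F1 z & f1 z < f2 y.

Lemma penalty_improve y : F2 y -> exists2 z, F1 z & f1 z <= f2 y.
Proof.
case/exact_penalty=> [y1 | [z z1 /ltW le_zy]]; last by exists z.
by exists y; rewrite ?f2_f1.
Qed.

Lemma penalty_opt_value v : is_opt_value F1 f1 v <-> is_opt_value F2 f2 v.
Proof.
split=> [[v_lb v_glb] | [v_lb v_glb]]; split.
- by move=> y /penalty_improve[z z1 le_zy]; apply: le_trans (v_lb z z1) le_zy.
- by move=> w w_lb; apply: v_glb => y y1; rewrite -f2_f1 //; apply/w_lb/F1_F2.
- by move=> y y1; rewrite -f2_f1 //; apply/v_lb/F1_F2.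
move=> w w_lb; apply: v_glb => y /penalty_improve[z z1 le_zy].
exact: le_trans (w_lb z z1) le_zy.
Qed.

Lemma penalty_opt_sol x : is_opt_sol F1 f1 x <-> is_opt_sol F2 f2 x.
Proof.
split=> [[x1 x_min] | [x2 x_min]].
  split=> [|y /penalty_improve[z z1 le_zy]]; first exact: F1_F2.
  by rewrite f2_f1 //; apply: le_trans (x_min z z1) le_zy.
case: (exact_penalty x2) => [x1 | [z z1 lt_zx]].
  by split=> // y y1; rewrite -!f2_f1 //; apply/x_min/F1_F2.
have := lt_le_trans lt_zx (x_min z (F1_F2 z1)).
by rewrite f2_f1 // ltxx.
Qed.

End ExactPenalty.

Section StochasticLP.
Variables (R : realFieldType) (n : nat) (A : 'I_n -> finType).
Variables (P : forall i : 'I_n, A i -> 'I_n -> R) (Rs S : {set 'I_n}).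
Arguments P : clear implicits.
Hypothesis P_ge0 : forall i a j, 0 <= P i a j.
Hypothesis P_sum1 : forall i a, \sum_j P i a j = 1.
Hypothesis S_Rs : [disjoint S & Rs].

Definition deficit (y : 'I_n -> R) : R := \sum_(i in S) (1 - y i).

Definition raise (y : 'I_n -> R) : 'I_n -> R :=
  fun i => if i \in Rs then 0 else Num.min 1 (y i + deficit y).

Lemma deficit_ge0 y : feas2 P Rs y -> 0 <= deficit y.
Proof.
by move=> [y01 _]; apply: sumr_ge0 => i _; rewrite subr_ge0; case/andP: (y01 i).
Qed.

Lemma deficit_eq0 y : feas2 P Rs y -> deficit y = 0 -> forall i, i \in S -> y i = 1.
Proof.
move=> [y01 _] /psumr_eq0P d0 i iS; apply/eqP; rewrite eq_sym -subr_eq0; apply/eqP.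
by apply: d0 => // j _; rewrite subr_ge0; case/andP: (y01 j).
Qed.

Lemma raise_le1 y i : raise y i <= 1.
Proof. by rewrite /raise; case: ifP; rewrite ?ler01 ?ge_min ?lexx. Qed.

Lemma raise_ge0 y i : feas2 P Rs y -> 0 <= raise y i.
Proof.
move=> hy; have [y01 _] := hy; rewrite /raise; case: ifP => // _.
by rewrite le_min ler01 addr_ge0 ?deficit_ge0 //; case/andP: (y01 i).
Qed.

Lemma raise_le_add y i : feas2 P Rs y -> raise y i <= y i + deficit y.
Proof.
move=> hy; have [y01 _] := hy; rewrite /raise; case: ifP => _; last by rewrite ge_min lexx orbT.
by rewrite addr_ge0 ?deficit_ge0 //; case/andP: (y01 i).
Qed.

Lemma feas1_raise y : feas2 P Rs y -> feas1 P Rs S (raise y).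
Proof.
move=> hy; have [y01 [_ y_exc]] := hy.
split; first split; [|split|].
- by move=> i; rewrite raise_ge0 ?raise_le1.
- by move=> i iR; rewrite /raise iR.
- move=> i iR a; have -> : raise y i = Num.min 1 (y i + deficit y).
    by rewrite /raise (negbTE iR).
  rewrite le_min; apply/andP; split.
    rewrite -[leRHS](P_sum1 a); apply: ler_sum => j _.
    by rewrite -[leRHS]mulr1; apply: ler_wpM2l => //; apply: raise_le1.
  apply: le_trans (_ : \sum_j P i a j * (y j + deficit y) <= _).
    by apply: ler_sum => j _; apply: ler_wpM2l => //; apply: raise_le_add.
  under eq_bigr do rewrite mulrDr.
  by rewrite big_split /= -mulr_suml P_sum1 mul1r lerD2r y_exc.
- move=> i iS; rewrite /raise (disjointFr S_Rs iS); apply: min_l.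
  rewrite -lerBlDl /deficit (bigD1 i) //= lerDl sumr_ge0 // => j _.
  by rewrite subr_ge0; case/andP: (y01 j).
Qed.

Lemma obj1_raise_le rho y :
  feas2 P Rs y -> obj1 (raise y) + (rho - n%:R) * deficit y <= obj2 rho S y.
Proof.
move=> hy; have : obj1 (raise y) <= obj1 y + deficit y * n%:R.
  apply: le_trans (_ : \sum_i (y i + deficit y) <= _).
    by apply: ler_sum => i _; apply: raise_le_add.
  by rewrite big_split /= sumr_const card_ord mulr_natr.
rewrite /obj2 -/(deficit y) -/(obj1 y); lra.
Qed.

Lemma obj2_eq_obj1 rho (x : 'I_n -> R) : (forall i, i \in S -> x i = 1) -> obj2 rho S x = obj1 x.
Proof.
by move=> x1; rewrite /obj2 [X in rho * X]big1 ?mulr0 ?addr0 // => i iS; rewrite x1 // subrr.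
Qed.

Lemma lp2_penalty_exact rho : n%:R < rho -> forall y, feas2 P Rs y ->
  feas1 P Rs S y \/ exists2 z, feas1 P Rs S z & obj1 z < obj2 rho S y.
Proof.
move=> n_lt_rho y hy.
have [d0 | d_neq0] := eqVneq (deficit y) 0; first by left; split=> //; apply: deficit_eq0.
right; exists (raise y); first exact: feas1_raise.
apply: lt_le_trans (obj1_raise_le rho hy); rewrite ltrDl mulr_gt0 ?subr_gt0 //.
by rewrite lt_def d_neq0 deficit_ge0.
Qed.

(* (LP1) as a system over nat-indexed variables: variable 0 bounds the objective
   from above, variable i.+1 is x_i. *)
Definition vcons (t : R) (a : 'I_n -> R) : nat -> R :=
  fun k => if k is k'.+1 then oapp a 0 (insub k') else t.

Lemma vconsS t a (i : 'I_n) : vcons t a i.+1 = a i.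
Proof. by rewrite /vcons valK. Qed.

Lemma vcons_eta (y : nat -> R) j : (j < n.+1)%N -> vcons (y 0%N) (fun i => y i.+1) j = y j.
Proof. by case: j => //= j j_lt_n; rewrite insubT. Qed.

Definition lincons (c0 : R) (a : 'I_n -> R) (b : R) : seq R * R := (mkseq (vcons c0 a) n.+1, b).

Lemma sat_lincons t x c0 a b :
  sat n.+1 (vcons t x) (lincons c0 a b) = (b <= c0 * t + \sum_i a i * x i).
Proof.
rewrite /sat big_ord_recl nth_mkseq //; congr (_ <= _ + _); apply: eq_bigr => i _.
by rewrite lift0 nth_mkseq ?ltnS // !vconsS.
Qed.

Definition unit_vec (i : 'I_n) : 'I_n -> R := fun j => (j == i)%:R.

Lemma sum_unit_vec i (f : 'I_n -> R) : \sum_j unit_vec i j * f j = f i.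
Proof.
under eq_bigr do rewrite mulr_natl mulrb.
by rewrite -big_mkcond big_pred1_eq.
Qed.

Definition lp1_system : seq (seq R * R) :=
  [seq lincons 0 (unit_vec i) 0 | i <- enum 'I_n] ++
  [seq lincons 0 (fun j => - unit_vec i j) (-1) | i <- enum 'I_n] ++
  [seq lincons 0 (fun j => - unit_vec i j) 0 | i <- enum Rs] ++
  [seq lincons 0 (unit_vec i) 1 | i <- enum S] ++
  [seq lincons 0 (fun j => unit_vec i j - P i a j) 0 | i <- enum (~: Rs), a <- enum (A i)] ++
  [:: lincons 1 (fun=> -1) 0].

Lemma lp1_systemP t x :
  all (sat n.+1 (vcons t x)) lp1_system <-> feas1 P Rs S x /\ obj1 x <= t.
Proof.
have sat_unit i b : sat n.+1 (vcons t x) (lincons 0 (unit_vec i) b) = (b <= x i).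
  by rewrite sat_lincons mul0r add0r sum_unit_vec.
have sat_nunit i b : sat n.+1 (vcons t x) (lincons 0 (fun j => - unit_vec i j) b) = (b <= - x i).
  by rewrite sat_lincons mul0r add0r; under eq_bigr do rewrite mulNr; rewrite sumrN sum_unit_vec.
have sat_exc i a : sat n.+1 (vcons t x) (lincons 0 (fun j => unit_vec i j - P i a j) 0) =
    (\sum_j P i a j * x j <= x i).
  rewrite sat_lincons mul0r add0r; under eq_bigr do rewrite mulrBl.
  by rewrite sumrB sum_unit_vec subr_ge0.
have sat_obj : sat n.+1 (vcons t x) (lincons 1 (fun=> -1) 0) = (obj1 x <= t).
  by rewrite sat_lincons mul1r; under eq_bigr do rewrite mulN1r; rewrite sumrN subr_ge0.
rewrite !all_cat all_seq1 !all_map sat_obj; split.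
  move=> /and5P[/allP x_ge0 /allP x_le1 /allP xR /allP xS /andP[/all_allpairsP x_exc ->]].
  have x_ge0' i : 0 <= x i by have := x_ge0 i; rewrite -enumT mem_enum /= sat_unit; apply.
  have x_le1' i : x i <= 1 by have := x_le1 i; rewrite -enumT mem_enum /= sat_nunit lerN2; apply.
  split=> //; split; first split; [|split|].
  - by move=> i; rewrite x_ge0' x_le1'.
  - move=> i iR; apply/eqP; rewrite eq_le x_ge0' andbT -oppr_ge0.
    by have := xR i; rewrite mem_enum /= sat_nunit; apply.
  - by move=> i iR a; rewrite -sat_exc; apply: x_exc; rewrite mem_enum ?inE.
  move=> i iS; apply/eqP; rewrite eq_le x_le1'.
  by have := xS i; rewrite mem_enum /= sat_unit; apply.
move=> [[[x01 [xR x_exc]] xS] ->]; rewrite andbT; apply/and5P; split.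
- by apply/allP => i _ /=; rewrite sat_unit; case/andP: (x01 i).
- by apply/allP => i _ /=; rewrite sat_nunit lerN2; case/andP: (x01 i).
- by apply/allP => i; rewrite mem_enum => iR /=; rewrite sat_nunit xR ?oppr0.
- by apply/allP => i; rewrite mem_enum => iS /=; rewrite sat_unit xS.
by apply/all_allpairsP => i a; rewrite mem_enum inE => iR _; rewrite sat_exc x_exc.
Qed.

Lemma feas2_0 : feas2 P Rs (fun=> 0).
Proof.
split=> [i | ]; first by rewrite lexx ler01.
by split=> // i _ a; rewrite big1 // => j _; rewrite mulr0.
Qed.

Lemma lp1_opt_value_exists : exists v, is_opt_value (feas1 P Rs S) (@obj1 R n) v.
Proof.
pose x1 := raise (fun=> 0).
have decode y : all (sat n.+1 y) lp1_system ->
    feas1 P Rs S (fun i => y i.+1) /\ obj1 (fun i : 'I_n => y i.+1) <= y 0%N.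
  by rewrite -(eq_all (eq_sat (vcons_eta y))) => /lp1_systemP.
have x1_enc : all (sat n.+1 (vcons (obj1 x1) x1)) lp1_system.
  by apply/lp1_systemP; split=> //; apply/feas1_raise/feas2_0.
have obj_ge0 y : all (sat n.+1 y) lp1_system -> 0 <= y 0%N.
  move=> /decode[[[y01 _] _] y_obj]; apply: le_trans y_obj.
  by apply: sumr_ge0 => i _; case/andP: (y01 i).
have [xm /decode[xm_feas xm_obj] xm_min] := lp_min_attained x1_enc obj_ge0.
exists (xm 0%N); split=> [y hy | w w_lb].
  by apply: (xm_min (vcons (obj1 y) y)); apply/lp1_systemP.
exact: le_trans (w_lb _ xm_feas) xm_obj.
Qed.

End StochasticLP.

Theorem lemma3 (R : realFieldType) (n : nat) (A : 'I_n -> finType)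
  (P : forall i : 'I_n, A i -> 'I_n -> R) (Rs S : {set 'I_n}) (rho : R) :
  is_MDP P ->
  [disjoint S & Rs] ->
  n%:R < rho ->
  (exists v : R, is_opt_value (feas1 P Rs S) (@obj1 R n) v /\
                 is_opt_value (feas2 P Rs) (obj2 rho S) v) /\
  (forall v : R, is_opt_value (feas1 P Rs S) (@obj1 R n) v <->
                 is_opt_value (feas2 P Rs) (obj2 rho S) v) /\
  (forall x : 'I_n -> R, is_opt_sol (feas1 P Rs S) (@obj1 R n) x <->
                         is_opt_sol (feas2 P Rs) (obj2 rho S) x).
Proof.
move=> [_ [P_ge0 P_sum1]] S_Rs n_lt_rho.
have F1_F2 x : feas1 P Rs S x -> feas2 P Rs x by case.
have f2_f1 x : feas1 P Rs S x -> obj2 rho S x = obj1 x by case=> _; apply: obj2_eq_obj1.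
have penalty_exact := lp2_penalty_exact P_ge0 P_sum1 S_Rs n_lt_rho.
have value_iff := penalty_opt_value F1_F2 f2_f1 penalty_exact.
have [v hv] := lp1_opt_value_exists P_ge0 P_sum1 S_Rs.
split; first by exists v; split; last apply/value_iff.
by split=> // x; apply: penalty_opt_sol.
Qed.
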